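(* There exists a function $f(n,w)$ such that for all positive integers $n,w$ the following holds. If $G$ is a connected graph and $(T,\mathcal{Y})$ is a lean tree-decomposition of $G$ of width at most $w$ such that $T$ contains a path $P$ of length at least $f(n,w)$, then $P$ has interior vertices $t_1,t_2,\ldots,t_n$, occurring along $P$ in this order, such that: (i) for some positive integer $s\leq w+1$, $|Y_{t_i}|=s$ for all $i\in[n]$, and $|Y_t|\geq s$ for every vertex $t$ of $P$ between $t_1$ and $t_n$; and (ii) there is a set $U\subseteq V(G)$ with $Y_{t_i}\cap Y_{t_j}=U$ for all distinct $i,j\in[n]$.
   Context: All graphs are finite and loopless but may have parallel edges; $[n]=\{1,\dots,n\}$. A tree-decomposition of $G$ is a pair $(T,\mathcal{Y})$ where $T$ is a tree and $\mathcal{Y}=\{Y_t\}_{t\in V(T)}$ is a family of subsets of $V(G)$ (bags) such that (W1) $\bigcup_{t} Y_t=V(G)$ and every edge of $G$ has both ends in some $Y_t$; and (W2) if $t'$ lies on the path of $T$ between $t$ and $t''$ then $Y_t\cap Y_{t''}\subseteq Y_{t'}$. Its width is $\max_t(|Y_t|-1)$. It is lean if additionally: (W3) for every two vertices $t,t'$ of $T$ and every positive integer $k$, either $G$ has $k$ vertex-disjoint paths between $Y_t$ and $Y_{t'}$, or some vertex $t''$ on the path of $T$ between $t$ and $t'$ has $|Y_{t''}|<k$; (W4) distinct vertices $t\ne t'$ of $T$ have $Y_t\neq Y_{t'}$; (W5) if $t_0\in V(T)$ and $B$ is a component of $T-t_0$, then $\bigcup_{t\in V(B)}Y_t\setminus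 Y_{t_0}\neq\emptyset$. *)

From mathcomp Require Import all_boot.
Set Implicit Arguments. Unset Strict Implicit. Unset Printing Implicit Defensive.

(* A (finite, loopless, possibly with parallel edges) graph: vertex type V,
   edge type E, and [ends e] = the two ends of edge e. *)
Definition loopless (V E : finType) (ends : E -> V * V) : Prop :=
  forall e, (ends e).1 != (ends e).2.

Definition madj (V E : finType) (ends : E -> V * V) : rel V :=
  fun x y => [exists e, ends e == (x, y)] || [exists e, ends e == (y, x)].

Definition gpath (V : finType) (adj : rel V) (p : seq V) : bool :=
  if p is x :: s then path adj x s && uniq p else false.

Definition gconnected (V : finType) (adj : rel V) : Prop :=
  forall x y, connect adj x y.

Definition is_tree (I : finType) (eT : rel I) : Prop :=
  [/\ irreflexive eT, symmetric eT,
      (exists t : I, True),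
      gconnected eT &
      (* no cycles *)
      forall (x : I) (s : seq I),
        path eT x s -> uniq (x :: s) -> 2 <= size s -> ~~ eT (last x s) x].

(* t' lies on the path of T between t and t'' *)
Definition on_tpath (I : finType) (eT : rel I) (t t'' t' : I) : Prop :=
  exists s : seq I,
    [/\ path eT t s, uniq (t :: s), last t s = t'' & t' \in t :: s].

Definition comp_minus (I : finType) (eT : rel I) (t0 : I) (B : {set I}) : Prop :=
  exists t1 : I, t1 != t0 /\
    B = [set t | (t != t0) &&
           connect [rel x y | [&& eT x y, x != t0 & y != t0]] t1 t].

Definition AB_path (V : finType) (adj : rel V) (A B : {set V}) (p : seq V) : bool :=
  if p is x :: s then [&& gpath adj p, x \in A & last x s \in B] else false.

Definition disjoint_paths (V : finType) (adj : rel V) (A B : {set V}) (k : nat) : Prop :=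
  exists ps : seq (seq V),
    [/\ size ps = k, all (AB_path adj A B) ps & uniq (flatten ps)].

Definition tree_decomp (V I : finType) (adj : rel V) (eT : rel I) (Y : I -> {set V}) : Prop :=
  [/\ is_tree eT,
      \bigcup_(t : I) Y t = [set: V],
      (forall x y, adj x y -> exists t, (x \in Y t) && (y \in Y t)) &
      (* W2 *)
      forall t t' t'', on_tpath eT t t'' t' -> Y t :&: Y t'' \subset Y t'].

Definition lean_tree_decomp (V I : finType) (adj : rel V) (eT : rel I) (Y : I -> {set V}) : Prop :=
  [/\ tree_decomp adj eT Y,
      (forall (t t' : I) (k : nat), 0 < k ->
         disjoint_paths adj (Y t) (Y t') k \/
         exists t'', on_tpath eT t t' t'' /\ #|Y t''| < k),
      (* W4 *)
      (forall t t', t != t' -> Y t != Y t') &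
      forall (t0 : I) (B : {set I}), comp_minus eT t0 B ->
         (\bigcup_(t in B) Y t) :\: Y t0 != set0].

Definition width_le (V I : finType) (Y : I -> {set V}) (w : nat) : Prop :=
  forall t, #|Y t| <= w.+1.

(* Along the path the bag sizes take at most [w + 2] values, so cutting the
   path into blocks and recursing on a block that misses the current minimum
   yields many positions sharing a bag size [s] that is minimal between them.
   By (W2) the size of the intersection of two of these bags only decreases
   when the pair is moved apart, so the same block argument makes it constant
   on a sub-family; constant-size intersections in a (W2)-consistent family
   are all equal. Leanness is needed only through (W4), to exclude [s = 0]. *)

From mathcomp Require Import all_boot zify.
Set Implicit Arguments. Unset Strict Implicit. Unset Printing Implicit Defensive.

Definition increasing_in (M len : nat) (e : nat -> nat) : Prop :=
  (forall i, i < M -> e i < len) /\ (forall i j, i < j < M -> e i < e j).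

Lemma increasing_in_id M len : M <= len -> increasing_in M len id.
Proof. by move=> M_len; split=> [i|i j /andP[]//]; lia. Qed.

Lemma increasing_in_shift M L len c e :
  increasing_in M L e -> c + L <= len -> increasing_in M len (fun i => c + e i).
Proof. by move=> [e_lt e_incr] cL; split=> [i /e_lt|i j /e_incr]; lia. Qed.

Lemma increasing_in_comp M L len e e' :
  increasing_in M L e -> increasing_in L len e' -> increasing_in M len (e' \o e).
Proof.
move=> [e_lt e_incr] [e'_lt e'_incr]; split=> [i /e_lt/e'_lt //|i j ijM].
by apply: e'_incr; rewrite e_incr // e_lt //; case/andP: ijM.
Qed.

Lemma increasing_in_le M len e i j :
  increasing_in M len e -> i <= j < M -> e i <= e j.
Proof.
move=> [_ e_incr] /andP[]; rewrite leq_eqVlt => /predU1P[-> //|ij jM].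
by rewrite ltnW // e_incr // ij.
Qed.

Definition path_consistent (T : finType) (N : nat) (C : nat -> {set T}) : Prop :=
  forall p q r, p <= q <= r -> r < N -> C p :&: C r \subset C q.

Lemma path_consistent_comp (T : finType) N M (C : nat -> {set T}) e :
  path_consistent N C -> increasing_in M N e -> path_consistent M (C \o e).
Proof.
move=> C_cons e_incr p q r /andP[pq qr] rM; apply: C_cons.
  by rewrite !(increasing_in_le e_incr) // ?pq ?qr //; lia.
by case: e_incr => /(_ r rM).
Qed.

Lemma path_consistent_setI_sub (T : finType) N (C : nat -> {set T}) u u' v' v :
  path_consistent N C -> u <= u' <= v' -> v' <= v < N ->
  C u :&: C v \subset C u' :&: C v'.
Proof.
move=> C_cons /andP[uu' u'v'] /andP[v'v vN].
by rewrite subsetI !C_cons //; lia.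
Qed.

(* Helly-type rigidity: in a path-consistent family, [C i :&: C k] sits inside both
   [C i :&: C j] and [C j :&: C k] for [i < j < k], so equal cardinalities
   force all three intersections to coincide. *)
Lemma pairwise_setI_const (T : finType) N (C : nat -> {set T}) c :
  path_consistent N C -> (forall i j, i < j < N -> #|C i :&: C j| = c) ->
  exists U, forall i j, i < N -> j < N -> i != j -> C i :&: C j = U.
Proof.
move=> C_cons C_card.
have setI_eq i j k : i < j < k -> k < N ->
    C i :&: C k = C i :&: C j /\ C i :&: C k = C j :&: C k.
  move=> ijk kN; split; apply/eqP; rewrite eqEcard !C_card ?leqnn ?andbT;
    try (apply: path_consistent_setI_sub C_cons _ _); lia.
have to_last i j : i < j < N -> C i :&: C j = C 0 :&: C N.-1.
  move=> ijN; have -> : C i :&: C j = C i :&: C N.-1.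
    have [jN|] := ltnP j N.-1; first by have [-> _] := setI_eq i j N.-1 ltac:(lia) ltac:(lia).
    by move=> jN; have -> : j = N.-1 by lia.
  case: i ijN => [//|i] ijN.
  by have [_ <-] := setI_eq 0 i.+1 N.-1 ltac:(lia) ltac:(lia).
exists (C 0 :&: C N.-1) => i j iN jN; rewrite neq_ltn => /orP[ij|ji].
  by apply: to_last; rewrite ij.
by rewrite setIC; apply: to_last; rewrite ji.
Qed.

Lemma block_bound b M L : b < M -> b * L + L <= M * L.
Proof. by move=> bM; rewrite -mulSnr leq_mul2r bM orbT. Qed.

(* Both lemmas below cut the range into [M] blocks of length [M ^ k]: either
   every block realises the current minimum value [m], or some block avoids
   it, and then the values there lie in a range shorter by one. *)
Section BlockRamsey.

Variable M : nat.
Hypothesis M_gt0 : 0 < M.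

Lemma exists_min_value_indices k : forall (g : nat -> nat) len m,
  (forall j, j < len -> m <= g j <= m + k) -> M ^ k.+1 <= len ->
  exists2 e, increasing_in M len e &
    exists s, (forall i, i < M -> g (e i) = s) /\
              (forall j, e 0 <= j <= e M.-1 -> s <= g j).
Proof.
elim: k => [|k IH] g len m g_range len_ge.
  rewrite expn1 in len_ge; exists id; first exact: increasing_in_id.
  exists m; split=> [i iM|j /andP[_ jM]].
    by have := g_range i; lia.
  by have := g_range j; lia.
set L := M ^ k.+1.
have L_gt0 : 0 < L by rewrite expn_gt0 M_gt0.
have block_len b : b < M -> b * L + L <= len.
  by move=> /(block_bound L) bML; apply: leq_trans bML _; rewrite -expnS.
pose hits_min b := has (fun j => g (b * L + j) == m) (iota 0 L).
have [all_hit | /allPn[b]] := boolP (all hits_min (iota 0 M)).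
  pose q b := find (fun j => g (b * L + j) == m) (iota 0 L).
  have q_spec b : b < M -> q b < L /\ g (b * L + q b) = m.
    move=> bM; have hit : hits_min b by apply: (allP all_hit); rewrite mem_iota.
    have qL : q b < L by rewrite -[L in _ < L](size_iota 0) -has_find.
    by split=> //; move: (nth_find 0 hit); rewrite nth_iota // => /eqP.
  have e_incr : increasing_in M len (fun b => b * L + q b).
    split=> [b bM|b c /andP[bc cM]].
      by have [+ _] := q_spec b bM; have := block_len b bM; lia.
    have [qbL _] := q_spec b (ltn_trans bc cM).
    have : b.+1 * L <= c * L by rewrite leq_mul2r bc orbT.
    by rewrite mulSnr; lia.
  exists (fun b => b * L + q b) => //; exists m; split=> [b /q_spec[] //|j].
  have [/(_ M.-1) e_lt _] := e_incr.
  by move=> /andP[_ /leq_ltn_trans/(_ (e_lt ltac:(lia)))] /g_range/andP[].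
rewrite mem_iota add0n => /andP[_ bM] /hasPn avoid_min.
have g_block_range j : j < L -> m.+1 <= g (b * L + j) <= m.+1 + k.
  move=> jL; have ne_m : g (b * L + j) != m by apply: avoid_min; rewrite mem_iota.
  by have := g_range (b * L + j); have := block_len b bM; lia.
have [e e_incr [s [e_s s_le]]] := IH _ _ _ g_block_range (leqnn _).
exists (fun i => b * L + e i); first exact: increasing_in_shift e_incr (block_len b bM).
exists s; split=> // j /andP[lo hi].
by have := s_le (j - b * L); rewrite subnKC; [apply; lia | lia].
Qed.

Lemma exists_const_pair_indices k : forall (h : nat -> nat -> nat) len m,
  (forall u u' v' v, u <= u' < v' -> v' <= v < len -> h u v <= h u' v') ->
  (forall u v, u < v < len -> m <= h u v <= m + k) -> M ^ k.+1 <= len ->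
  exists2 e, increasing_in M len e &
    exists c, forall i j, i < j < M -> h (e i) (e j) = c.
Proof.
elim: k => [|k IH] h len m h_anti h_range len_ge.
  rewrite expn1 in len_ge; exists id; first exact: increasing_in_id.
  by exists m => i j ijM; have := h_range i j; lia.
set L := M ^ k.+1.
have L_gt0 : 0 < L by rewrite expn_gt0 M_gt0.
have ML_len : M * L <= len by rewrite -expnS.
have [all_min | /allPn[b]] :=
  boolP (all (fun b => h (b * L) (b.+1 * L) == m) (iota 0 M.-1)).
  exists (fun b => b * L).
    split=> [b /(block_bound L)|b c /andP[bc _]]; first lia.
    by rewrite ltn_mul2r L_gt0.
  exists m => i j /andP[ij jM].
  have jL_lt : j * L < len by have := block_bound L jM; lia.
  have /h_range : i * L < j * L < len by rewrite ltn_mul2r L_gt0 ij.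
  have : h (i * L) (j * L) <= h (i * L) (i.+1 * L).
    have : i.+1 * L <= j * L by rewrite leq_mul2r ij orbT.
    by rewrite mulSnr => ij_L; apply: h_anti; lia.
  have /eqP : h (i * L) (i.+1 * L) == m by apply: (allP all_min); rewrite mem_iota; lia.
  lia.
rewrite mem_iota add0n => /andP[_ bM] block_not_min.
have window : b * L + L.+1 <= len.
  have b1M : b.+1 < M by lia.
  by have := block_bound L b1M; rewrite mulSnr; lia.
have h_window_anti u u' v' v : u <= u' < v' -> v' <= v < L.+1 ->
    h (b * L + u) (b * L + v) <= h (b * L + u') (b * L + v').
  by move=> uv' vL; apply: h_anti; lia.
have h_window_range u v : u < v < L.+1 -> m.+1 <= h (b * L + u) (b * L + v) <= m.+1 + k.
  move=> uvL; have := h_range (b * L + u) (b * L + v).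
  have : h (b * L) (b.+1 * L) <= h (b * L + u) (b * L + v) by apply: h_anti; lia.
  by have := h_range (b * L) (b.+1 * L); lia.
have [e e_incr [c e_c]] := IH _ _ _ h_window_anti h_window_range (leqW (leqnn _)).
exists (fun i => b * L + e i); first exact: increasing_in_shift e_incr window.
by exists c.
Qed.

End BlockRamsey.

Lemma path_consistent_regular_indices (T : finType) (C : nat -> {set T}) N n w :
  0 < n -> path_consistent N C -> (forall j, j < N -> #|C j| <= w) ->
  (n ^ w.+1) ^ w.+1 <= N ->
  exists2 e, increasing_in n N e &
    (exists2 sz, (forall i, i < n -> #|C (e i)| = sz) &
                    (forall j, e 0 <= j <= e n.-1 -> sz <= #|C j|)) /\
    exists U, forall i j, i < n -> j < n -> i != j -> C (e i) :&: C (e j) = U.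
Proof.
move=> n_gt0 C_cons C_le N_ge; set K := n ^ w.+1.
have K_gt0 : 0 < K by rewrite expn_gt0 n_gt0.
have [eA eA_incr [sz [eA_sz sz_le]]] :=
  @exists_min_value_indices K K_gt0 w (fun j => #|C j|) N 0 (fun j jN => C_le j jN) N_ge.
have CA_cons := path_consistent_comp C_cons eA_incr.
pose h u v := #|C (eA u) :&: C (eA v)|.
have h_anti u u' v' v : u <= u' < v' -> v' <= v < K -> h u v <= h u' v'.
  by move=> uv' vK; apply/subset_leq_card/(path_consistent_setI_sub CA_cons); lia.
have h_range u v : u < v < K -> 0 <= h u v <= 0 + w.
  move=> uvK; rewrite /h /= (leq_trans (subset_leq_card (subsetIl _ _))) //.
  by apply: C_le; case: eA_incr => /(_ u) + _; apply; lia.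
have [eB eB_incr [c eB_c]] := exists_const_pair_indices n_gt0 h_anti h_range (leqnn _).
have e_incr := increasing_in_comp eB_incr eA_incr.
exists (eA \o eB) => //; split.
- exists sz => [i /(proj1 eB_incr) /eA_sz //|j /andP[lo hi]].
  apply: sz_le; rewrite /= in lo hi.
  have [eB_lt _] := eB_incr.
  have eA_lo : eA 0 <= eA (eB 0).
    by apply: (increasing_in_le eA_incr); have := eB_lt 0 n_gt0; lia.
  have eA_hi : eA (eB n.-1) <= eA K.-1.
    by apply: (increasing_in_le eA_incr); have := eB_lt n.-1; lia.
  lia.
- apply: pairwise_setI_const (path_consistent_comp C_cons e_incr) _.
  exact: eB_c.
Qed.

Lemma on_tpath_nth (I : finType) (eT : rel I) (P : seq I) (d : I) :
  sorted eT P -> uniq P -> forall p q r, p <= q <= r -> r < size P ->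
  on_tpath eT (nth d P p) (nth d P r) (nth d P q).
Proof.
elim: P => [//|y t IH] /= t_path /andP[y_notin t_uniq] [|p] q r pqr rt.
  have take_cons : y :: take r t = take r.+1 (y :: t) by [].
  rewrite [nth d _ 0]/=; exists (take r t); split; first exact: take_path.
  - by rewrite take_cons take_uniq //= y_notin.
  - by rewrite (last_nth d) size_takel // take_cons nth_take.
  - by rewrite take_cons -(@nth_take r.+1) ?mem_nth ?size_takel //; lia.
case: q r pqr rt => [|q] [|r] //=; rewrite ?andbF // => pqr rt.
exact: IH (path_sorted t_path) t_uniq p q r pqr rt.
Qed.

Lemma tree_decomp_path_consistent (V I : finType) (adj : rel V) (eT : rel I)
    (Y : I -> {set V}) (P : seq I) (d : I) :
  tree_decomp adj eT Y -> sorted eT P -> uniq P ->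
  path_consistent (size P) (fun j => Y (nth d P j)).
Proof.
by move=> [_ _ _ W2] P_sorted P_uniq p q r pqr rP; apply/W2/on_tpath_nth.
Qed.

Lemma card_bag_gt0 (I V : finType) (Y : I -> {set V}) t t' :
  (forall t t', t != t' -> Y t != Y t') -> t != t' -> #|Y t| = #|Y t'| ->
  0 < #|Y t|.
Proof.
move=> Y_inj tt' eq_card; rewrite lt0n; apply: contra (Y_inj _ _ tt') => /eqP Yt0.
by rewrite (cards0_eq Yt0) eq_sym -cards_eq0 -eq_card Yt0.
Qed.

Theorem lemma5p4 :
  exists f : nat -> nat -> nat,
  forall (n w : nat), 0 < n -> 0 < w ->
  forall (V E I : finType) (ends : E -> V * V) (eT : rel I) (Y : I -> {set V}),
    loopless ends ->
    gconnected (madj ends) ->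
    lean_tree_decomp (madj ends) eT Y ->
    width_le Y w ->
  forall (x : I) (s : seq I),
    path eT x s -> uniq (x :: s) -> f n w <= size s ->
  exists idx : nat -> nat,
    [/\ (forall i, i < n -> 0 < idx i /\ idx i < size s),
        (forall i j, i < j < n -> idx i < idx j),
        (exists2 sz : nat, 0 < sz <= w.+1 &
           (forall i, i < n -> #|Y (nth x (x :: s) (idx i))| = sz) /\
           (forall j, idx 0 <= j <= idx n.-1 -> sz <= #|Y (nth x (x :: s) j)|)) &
        exists U : {set V},
          forall i j, i < n -> j < n -> i != j ->
            Y (nth x (x :: s) (idx i)) :&: Y (nth x (x :: s) (idx j)) = U].
Proof.
exists (fun n w => ((n.+1 ^ w.+2) ^ w.+2).+1).
move=> n w n_gt0 _ V E I ends eT Y _ _ [tdec _ bags_inj _] width x s xs_path xs_uniq s_long.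
pose B j := Y (nth x (x :: s) j).
have interior_incr : increasing_in (size s).-1 (size s).+1 succn.
  by split=> [|i j /andP[]] //; lia.
have C_cons : path_consistent (size s).-1 (B \o succn).
  have := tree_decomp_path_consistent (P := x :: s) x tdec xs_path xs_uniq.
  by move/path_consistent_comp; apply.
(* [n.+1] indices, so that even for [n = 1] two distinct bags share the size [sz]. *)
have [e [e_lt e_incr] [[sz e_sz sz_le] [U e_U]]] :=
  path_consistent_regular_indices (ltn0Sn n) C_cons (fun j _ => width _) ltac:(lia).
have e0_lt := e_lt 0 (ltn0Sn n); have en_lt := e_lt n (ltnSn n).
have e0_en := e_incr 0 n ltac:(lia).
have e_hi : e n.-1 <= e n by apply: (increasing_in_le (conj e_lt e_incr)); lia.
exists (succn \o e); split.
- by move=> i /ltnW/e_lt /=; lia.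
- by move=> i j /andP[ij jn]; rewrite ltnS e_incr // ij ltnW.
- exists sz; last first.
    split=> [i /ltnW/e_sz //|j /andP[/= lo hi]].
    by have := sz_le j.-1; rewrite /= prednK; [apply; lia | lia].
  rewrite -(e_sz 0) // width andbT.
  apply: (card_bag_gt0 bags_inj (t' := nth x (x :: s) (e n).+1)).
    by rewrite nth_uniq //=; lia.
  by rewrite [LHS](e_sz 0) // [RHS](e_sz n).
- by exists U => i j /ltnW iN /ltnW jN; apply: e_U.
Qed.
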